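(* For each $j\geq1$ there is a unique element $\Phi_j$ of the left ideal $Ay$ that is homogeneous of degree $j(N-1)$ and satisfies $\Phi_jx-x\Phi_j=x^Ny^{j-1}$. It is given by \[ \Phi_j=\frac1j\sum_{i=0}^{j-1}\binom{j}{i}c_i(N-1)\,x^{i(N-1)}y^{j-i}, \] and in particular $\Phi_1=y$ and, for $j\ge2$, $\Phi_j\equiv\frac1jy^j-\frac N2x^{N-1}y^{j-1}\pmod{F_{j-2}}$.
   Context: Let $\Bbbk$ be a field of characteristic zero and $N\geq1$ an integer. Let $A=A_N$ be the $\Bbbk$-algebra generated by $x,y$ subject to the relation $yx-xy=x^N$, graded with $x$ in degree $1$ and $y$ in degree $N-1$. For $k\ge-1$, $F_k$ is the span of the monomials $x^iy^j$ with $i\ge0$, $j\le k$. The polynomials $c_i(q)\in\mathbb Q[q]$ are defined recursively by $\sum_{i=0}^{j}\frac{(1)_{q,j+1-i}}{(j+1-i)!}\frac{c_i(q)}{i!}=\delta_{j,0}$ for all $j\ge0$, where $(a)_{k,i}=a(a+k)\cdots(a+(i-1)k)$; $c_i(N-1)$ denotes evaluation at $q=N-1$. *)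

From HB Require Import structures.
From mathcomp Require Import all_boot all_order all_algebra.
Set Implicit Arguments. Unset Strict Implicit. Unset Printing Implicit Defensive.
Import Order.TTheory GRing.Theory Num.Theory.
Local Open Scope ring_scope.

(* The algebra A_N = k<x,y>/(yx - xy = x^N) is modelled by its PBW normal
   form: an element sum_{i,j} a_{ij} x^i y^j is represented by the
   polynomial P : {poly {poly K}} whose j-th coefficient (a polynomial in x)
   is sum_i a_{ij} x^i, i.e. the outer variable is y and the inner one is x.
   NOTE: the ring structure of {poly {poly K}} is the COMMUTATIVE one and is
   only used to build normal forms; the product of A_N is [Amul] below. *)

Section Alg.
Variable K : fieldType.
Variable N : nat.

Definition PBW := {poly {poly K}}.

Definition mono (a b : nat) : PBW := ('X^a)%:P * 'X^b.
Definition sc (c : K) (p : PBW) : PBW := (c%:P)%:P * p.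

Definition ax : PBW := mono 1 0.
Definition ay : PBW := mono 0 1.

(* left multiplication by y on normal forms, using
   y q(x) = q(x) y + x^N q'(x)  (consequence of yx - xy = x^N). *)
Definition Ly (p : PBW) : PBW :=
  p * 'X + map_poly (fun q : {poly K} => 'X^N * q^`()) p.

(* product in A_N:  (sum_j p_j(x) y^j) * q = sum_j p_j(x) (y^j q) *)
Definition Amul (p q : PBW) : PBW :=
  \sum_(j < size p) (p`_j)%:P * iter j Ly q.

Definition inAy (p : PBW) : Prop := exists a : PBW, p = Amul a ay.

Definition homog (d : nat) (p : PBW) : Prop :=
  forall i j : nat, (p`_j)`_i != 0 -> (i + j * (N - 1))%N = d.

(* membership in F_k = span{x^i y^j : j <= k}, for k >= -1 *)
Definition inF (k : int) (p : PBW) : Prop := ((size p)%:Z <= k + 1)%R.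

End Alg.

Definition poch1 (i : nat) : {poly rat} := \prod_(m < i) (1 + m%:R *: 'X).

(* The polynomials c_i(q): the recursion
     sum_{i=0}^{j} (1)_{q,j+1-i}/(j+1-i)! * c_i/i! = delta_{j,0}
   solved for c_j (the i = j term is c_j / j!). *)
Definition cnext (s : seq {poly rat}) : {poly rat} :=
  let j := size s in
  (j`!)%:R *: ((j == 0%N)%:R
     - \sum_(i < j) (((j.+1 - i)`!)%:R^-1 * (i`!)%:R^-1) *: (poch1 (j.+1 - i) * s`_i)).

Fixpoint cseq (n : nat) : seq {poly rat} :=
  if n is n'.+1 then rcons (cseq n') (cnext (cseq n')) else [::].

Definition cpoly (i : nat) : {poly rat} := nth 0 (cseq i.+1) i.

Definition cval (K : fieldType) (N i : nat) : K :=
  (map_poly (ratr : rat -> K) (cpoly i)).[(N - 1)%:R].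

Definition Phi (K : fieldType) (N j : nat) : PBW K :=
  sc (j%:R^-1) (\sum_(i < j) sc ('C(j, i)%:R * cval K N i) (mono K (i * (N - 1)) (j - i))).

(* Right multiplication by y shifts the y-degree, so A y is the set of normal
   forms with no y^0 part.  Since y r = r y + delta r on k[x], with
   delta = x^N d/dx, the y^t-coefficient of [P, x] = P x - x P is
   sum_(k > t) C(k, t) delta^(k-t)(x) p_k, and delta^m(x) = (1)_{N-1,m} x^(1+m(N-1)).
   In characteristic 0 the top coefficient of [P, x] is (deg_y P) x^N p_top,
   so [-, x] is injective on A y: this gives uniqueness.  For Phi_j, writing
   n = j - t, the identity C(j,i) C(j-i,t) = C(j,n) C(n,i) collapses the
   y^t-coefficient of [Phi_j, x] to (1/j) C(j,n) x^(1+n(N-1)) times the left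
   side of the recursion defining the c_i, which is [n == 1].  The leading
   terms of Phi_j come from c_0 = 1 and c_1 = -N/2. *)

From HB Require Import structures.
From mathcomp Require Import all_boot all_order all_algebra.
From mathcomp Require Import zify ring.
Set Implicit Arguments. Unset Strict Implicit. Unset Printing Implicit Defensive.
Import Order.TTheory GRing.Theory Num.Theory.
Local Open Scope ring_scope.

Lemma sum_coef_widen (R : nzRingType) (p : {poly R}) (G : nat -> R) n :
  (size p <= n)%N -> \sum_(k < size p) p`_k * G k = \sum_(k < n) p`_k * G k.
Proof.
move=> le_pn; rewrite -(subnKC le_pn) big_split_ord /= [X in _ + X]big1 ?addr0 //.
by move=> k _; rewrite nth_default ?mul0r ?leq_addr.
Qed.

Lemma sum_mulrb_eq (V : nmodType) (F : nat -> V) n t :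
  \sum_(k < n) F k *+ (k == t :> nat) = if (t < n)%N then F t else 0.
Proof.
rewrite -[RHS](big_ord1_eq +%R F t n) [RHS]big_mkcond /=.
by apply: eq_bigr => k _; rewrite mulrb.
Qed.

Lemma bin_mul_bin_sub i n j : (i <= n <= j)%N ->
  ('C(j, i) * 'C(j - i, j - n) = 'C(j, n) * 'C(n, i))%N.
Proof.
case/andP=> le_in le_nj; have le_ij := leq_trans le_in le_nj.
have := bin_fact (leq_sub2l j le_in); rewrite (_ : j - i - (j - n) = n - i)%N; last by lia.
move=> bin_ji; apply/eqP; rewrite -(eqn_pmul2r (_ : 0 < i`! * (n - i)`! * (j - n)`!)%N); last first.
  by rewrite !muln_gt0 !fact_gt0.
apply/eqP; transitivity j`!.
  by rewrite -(bin_fact le_ij) -bin_ji; ring.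
by rewrite -(bin_fact le_nj) -(bin_fact le_in); ring.
Qed.

Definition pochhammer1 (R : nzRingType) (q : R) (m : nat) : R :=
  \prod_(k < m) (1 + k%:R * q).

Lemma pochhammer1S (R : nzRingType) (q : R) m :
  pochhammer1 q m.+1 = pochhammer1 q m * (1 + m%:R * q).
Proof. by rewrite /pochhammer1 big_ord_recr. Qed.

Lemma pochhammer1_1 (R : nzRingType) (q : R) : pochhammer1 q 1 = 1.
Proof. by rewrite pochhammer1S /pochhammer1 big_ord0 mul0r addr0 mulr1. Qed.

Lemma horner_map_poch1 (R : comNzRingType) (f : {rmorphism rat -> R}) (q : R) m :
  (map_poly f (poch1 m)).[q] = pochhammer1 q m.
Proof.
rewrite /poch1 /pochhammer1 rmorph_prod horner_prod; apply: eq_bigr => k _.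
rewrite rmorphD rmorph1 -mul_polyC rmorphM /= map_polyC map_polyX.
by rewrite hornerD hornerM !hornerC hornerX; congr (1 + _ * q); exact: rmorph_nat.
Qed.

Lemma poch1_1 : poch1 1 = 1.
Proof. by rewrite /poch1 big_ord1 scale0r addr0. Qed.

Lemma size_cseq n : size (cseq n) = n.
Proof. by elim: n => //= n IH; rewrite size_rcons IH. Qed.

Lemma nth_cseq n i : (i < n)%N -> nth 0 (cseq n) i = cpoly i.
Proof.
elim: n => // n IH; rewrite ltnS leq_eqVlt => /predU1P[-> // | lt_in].
by rewrite /= nth_rcons size_cseq lt_in IH.
Qed.

Lemma cpolyE n : cpoly n = cnext (cseq n).
Proof. by rewrite /cpoly /= nth_rcons size_cseq ltnn eqxx. Qed.

(* The defining recursion of the c_i, multiplied by (n+1)!. *)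
Lemma cpoly_rec n :
  \sum_(i < n.+1) 'C(n.+1, i)%:R *: (poch1 (n.+1 - i) * cpoly i) = (n == 0)%:R.
Proof.
have fact_neq0 m : (m`!%:R : rat) != 0 by rewrite pnatr_eq0 -lt0n fact_gt0.
set a := fun i : 'I_n => ((n.+1 - i)`!%:R^-1 * i`!%:R^-1 : rat).
have binE (i : 'I_n) : 'C(n.+1, i)%:R = n.+1`!%:R * a i :> rat.
  have le_in : (i <= n.+1)%N by rewrite ltnW // ltnS ltnW.
  rewrite /a -(bin_fact le_in) !natrM.
  by field; rewrite !fact_neq0.
rewrite big_ord_recr /= binSn subSnn poch1_1 mul1r.
rewrite [cpoly n]cpolyE /cnext size_cseq.
under eq_bigr do rewrite binE -scalerA.
under [X in _ *: (_ - X)]eq_bigr do rewrite nth_cseq //.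
rewrite -scaler_sumr scalerA -natrM -factS -scalerDr addrC subrK.
by case: n {a binE} => [|n]; rewrite ?scale1r // mulr0n scaler0.
Qed.

Section RatrPchar0.
Variable F : fieldType.
Hypothesis F0 : [pchar F] =i pred0.

Lemma pchar0_natr_eq0 n : ((n%:R : F) == 0) = (n == 0)%N.
Proof. exact: (pcharf0P _).1 F0 n. Qed.

Lemma pchar0_denq_neq0 (x : rat) : (denq x)%:~R != 0 :> F.
Proof. by have [d ->] := denqP x; rewrite -[_%:~R]/(d.+1%:R : F) pchar0_natr_eq0. Qed.

Lemma pchar0_ratr_frac (z : rat) (n d : int) :
  d%:~R != 0 :> F -> z * d%:~R = n%:~R -> ratr z = n%:~R / d%:~R :> F.
Proof.
move=> dF zd; apply/eqP; rewrite /ratr eqr_div ?pchar0_denq_neq0 // -!intrM.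
apply/eqP; congr _%:~R; apply: (@intr_inj rat).
by rewrite !intrM numqE -zd mulrAC.
Qed.

Fact ratr_pchar0_zmod_morphism : zmod_morphism (@ratr F).
Proof.
move=> x y; have dxy := mulf_neq0 (pchar0_denq_neq0 x) (pchar0_denq_neq0 y).
rewrite (@pchar0_ratr_frac _ (numq x * denq y - numq y * denq x) (denq x * denq y)).
- by rewrite /ratr !intrM intrB !intrM; field; rewrite !pchar0_denq_neq0.
- by rewrite intrM.
- by rewrite intrB !intrM !numqE; ring.
Qed.

Fact ratr_pchar0_monoid_morphism : monoid_morphism (@ratr F).
Proof.
split=> [|x y]; first by rewrite /ratr divr1.
have dxy := mulf_neq0 (pchar0_denq_neq0 x) (pchar0_denq_neq0 y).
rewrite (@pchar0_ratr_frac _ (numq x * numq y) (denq x * denq y)).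
- by rewrite /ratr !intrM; field; rewrite !pchar0_denq_neq0.
- by rewrite intrM.
- by rewrite !intrM !numqE; ring.
Qed.

(* [rat.v] makes [ratr] a ring morphism only into numeric fields; this copy
   carries the characteristic hypothesis so that it is one into any field of
   characteristic 0. *)
Definition ratF of [pchar F] =i pred0 : rat -> F := ratr.
HB.instance Definition _ :=
  GRing.isZmodMorphism.Build rat F (ratF F0) ratr_pchar0_zmod_morphism.
HB.instance Definition _ :=
  GRing.isMonoidMorphism.Build rat F (ratF F0) ratr_pchar0_monoid_morphism.

End RatrPchar0.

Section CvalRec.
Variables (K : fieldType) (N : nat).
Hypothesis K0 : [pchar K] =i pred0.

Lemma cval_rec n :
  \sum_(i < n.+1) 'C(n.+1, i)%:R * cval K N i * pochhammer1 (N - 1)%:R (n.+1 - i)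
  = (n == 0)%:R.
Proof.
have := congr1 (fun p => (map_poly (ratF K0) p).[(N - 1)%:R]) (cpoly_rec n).
rewrite /= rmorph_sum horner_sum rmorph_nat -polyC_natr hornerC => <-.
apply: eq_bigr => i _.
rewrite -mul_polyC !rmorphM /= map_polyC !hornerM hornerC horner_map_poch1.
by rewrite mulrAC mulrA; congr (_ * _ * _); apply/esym/rmorph_nat.
Qed.

Lemma cval0 : cval K N 0 = 1.
Proof. by have := cval_rec 0; rewrite big_ord1 bin0 pochhammer1_1 mul1r mulr1. Qed.

Lemma cval1 : (0 < N)%N -> cval K N 1 = - (N%:R / 2%:R).
Proof.
move=> N_gt0; have := cval_rec 1.
rewrite big_ord_recr big_ord1 /= cval0 pochhammer1S pochhammer1_1 mul1r mulr1.
rewrite bin0 bin1 !mul1r mulr1 nat1r subn1 prednK // => sum0.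
have two_neq0 : (2%:R : K) != 0 by rewrite pchar0_natr_eq0.
apply: (mulfI two_neq0); rewrite mulrN mulrCA divff // mulr1.
by apply/eqP; rewrite -addr_eq0 addrC sum0.
Qed.

End CvalRec.

Section NormalForm.
Variables (K : fieldType) (N : nat).
Implicit Types (P Q : PBW K) (r : {poly K}).

(* The derivation [r |-> y r - r y] of k[x] inside A_N. *)
Definition xNderiv r := 'X^N * r^`().

Lemma xNderivMn r n : xNderiv (r *+ n) = xNderiv r *+ n.
Proof. by rewrite /xNderiv derivMn mulrnAr. Qed.

Lemma xNderiv0 : xNderiv 0 = 0.
Proof. by rewrite /xNderiv deriv0 mulr0. Qed.

Lemma coef_Ly P t :
  (Ly N P)`_t = (if t is t'.+1 then P`_t' else 0) + xNderiv P`_t.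
Proof. by rewrite /Ly coefD coefMX coef_map_id0 ?deriv0 ?mulr0 //; case: t. Qed.

Lemma coef_iter_Ly_polyC r b t :
  (iter b (Ly N) r%:P)`_t = iter (b - t) xNderiv r *+ 'C(b, t).
Proof.
elim: b t => [|b IHb] [|t] /=; rewrite ?coefC //.
- by rewrite coef_Ly IHb !subn0 !bin0 add0r.
rewrite coef_Ly !IHb subSS binS mulrnDr addrC xNderivMn.
have [lt_tb | le_bt] := ltnP t b; first by rewrite -iterS subnSK.
by rewrite bin_small ?ltnS // !mulr0n xNderiv0 add0r.
Qed.

Lemma coef_Amul P Q t :
  (Amul N P Q)`_t = \sum_(k < size P) P`_k * (iter k (Ly N) Q)`_t.
Proof. by rewrite /Amul coef_sum; apply: eq_bigr => k _; rewrite coefCM. Qed.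

Lemma AmulBl P Q R : Amul N (P - Q) R = Amul N P R - Amul N Q R.
Proof.
apply/polyP => t; rewrite coefB !coef_Amul.
set G := fun k => (iter k (Ly N) R)`_t; set n := maxn (size P) (size Q).
have le_PBQ : (size (P - Q)%R <= n)%N by rewrite (leq_trans (size_polyD _ _)) ?size_polyN.
rewrite !(sum_coef_widen G (_ : _ <= n)%N) ?leq_maxl ?leq_maxr // -sumrB.
by apply: eq_bigr => k _; rewrite coefB mulrBl.
Qed.

Lemma Amul_xl P : Amul N (ax K) P = 'X%:P * P.
Proof. by rewrite /Amul /ax /mono expr0 mulr1 size_polyC polyX_eq0 big_ord1 coefC. Qed.

Lemma Ly_Xn m : Ly N ('X^m : PBW K) = 'X^(m.+1).
Proof.
apply/polyP => t; rewrite coef_Ly !coefXn -polyC_natr /xNderiv derivC mulr0 addr0.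
by case: t => [|t]; rewrite ?coefXn.
Qed.

Lemma Amul_yr P : Amul N P (ay K) = P * 'X.
Proof.
have iter_Ly_X k : iter k (Ly N) ('X : PBW K) = 'X^(k.+1).
  by elim: k => [|k IHk]; rewrite ?expr1 // iterS IHk Ly_Xn.
rewrite /Amul /ay /mono expr0 polyC1 mul1r expr1.
under eq_bigr do rewrite iter_Ly_X exprSr mulrA.
rewrite -mulr_suml; congr (_ * _).
by rewrite -[RHS]coefK poly_def; under eq_bigr do rewrite mul_polyC.
Qed.

Lemma inAyP P : inAy N P <-> P`_0 = 0.
Proof.
split=> [[a ->] | P0]; first by rewrite Amul_yr coefMX.
exists (drop_poly 1 P); rewrite Amul_yr -[LHS](poly_take_drop 1) expr1.
suff -> : take_poly 1 P = 0 by rewrite add0r.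
by apply/polyP => -[|i]; rewrite coef_take_poly coef0.
Qed.

End NormalForm.

Section Commutator.
Variables (K : fieldType) (N : nat).
Implicit Types (P Q : PBW K).

Definition commx P := Amul N P (ax K) - Amul N (ax K) P.

Lemma commxB P Q : commx (P - Q) = commx P - commx Q.
Proof. by rewrite /commx !AmulBl !Amul_xl mulrBr; ring. Qed.

(* The coefficient of y^t in [y^k, x] = sum_(t < k) C(k, t) xNderiv^(k - t)(x) y^t. *)
Definition commxYn_coef k t : {poly K} :=
  if (t < k)%N then iter (k - t) (@xNderiv K N) 'X *+ 'C(k, t) else 0.

Lemma coef_commx P n t : (size P <= n)%N ->
  (commx P)`_t = \sum_(k < n) P`_k * commxYn_coef k t.
Proof.
move=> le_Pn; rewrite coefB coef_Amul Amul_xl coefCM.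
rewrite (sum_coef_widen (fun k => (iter k (Ly N) (ax K))`_t) le_Pn).
have iter_Ly_x k : (iter k (Ly N) (ax K))`_t = commxYn_coef k t + 'X *+ (k == t).
  rewrite /ax /mono expr0 mulr1 coef_iter_Ly_polyC /commxYn_coef.
  case: ltngtP => [lt_tk | lt_kt | ->]; rewrite ?addr0 ?add0r ?mulr0n //.
    by rewrite bin_small.
  by rewrite subnn binn.
under eq_bigr do rewrite iter_Ly_x mulrDr mulrnAr.
rewrite big_split /= (sum_mulrb_eq (fun k => P`_k * 'X)) mulrC.
case: ltnP => [_ | le_nt]; first by rewrite addrK.
by rewrite nth_default ?mulr0 ?subr0 ?addr0 // (leq_trans le_Pn).
Qed.

Lemma commx_eq0 P : [pchar K] =i pred0 -> commx P = 0 -> (size P <= 1)%N.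
Proof.
move=> K0 comm0; case size_P: (size P) => [|[|m]] //.
have := congr1 (fun p : PBW K => p`_m) comm0.
rewrite /= coef0 (coef_commx m (_ : size P <= m.+2)%N) ?size_P //.
rewrite big_ord_recr /= big1 => [|k _]; last first.
  by rewrite /commxYn_coef ltnNge -ltnS ltn_ord mulr0.
rewrite add0r /commxYn_coef ltnSn subSnn binSn /= /xNderiv derivX mulr1.
move/eqP; rewrite -mulr_natr !mulf_eq0 -polyC_natr polyC_eq0 pchar0_natr_eq0 //=.
rewrite (negPf (monic_neq0 (monicXn _ _))) orbF.
have : lead_coef P != 0 by rewrite lead_coef_eq0 -size_poly_eq0 size_P.
by rewrite lead_coefE size_P => /negPf ->.
Qed.

Lemma commx_inj_inAy P Q : [pchar K] =i pred0 ->
  inAy N P -> inAy N Q -> commx P = commx Q -> P = Q.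
Proof.
move=> K0 /inAyP P0 /inAyP Q0 eq_comm; apply/eqP; rewrite -subr_eq0.
have /size1_polyC -> : (size (P - Q)%R <= 1)%N.
  by apply: commx_eq0 => //; rewrite commxB eq_comm subrr.
by rewrite coefB P0 Q0 subrr polyC0.
Qed.

Hypothesis N_gt0 : (0 < N)%N.

Lemma iter_xNderiv_X m :
  iter m (@xNderiv K N) 'X = pochhammer1 (N - 1)%:R m *: 'X^(1 + m * (N - 1)).
Proof.
elim: m => [|m IHm]; first by rewrite /pochhammer1 big_ord0 scale1r expr1.
rewrite iterS IHm /xNderiv derivZ derivXn -scalerAr mulrnAr -exprD pochhammer1S.
rewrite -scalerA; congr (_ *: _).
rewrite (_ : N + _ = 1 + m.+1 * (N - 1))%N; last by rewrite mulSn; lia.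
by rewrite -scaler_nat natrD natrM.
Qed.

Lemma commxYn_coefE k t : commxYn_coef k t =
  if (t < k)%N then
    ('C(k, t)%:R * pochhammer1 (N - 1)%:R (k - t)) *: 'X^(1 + (k - t) * (N - 1))
  else 0.
Proof.
by rewrite /commxYn_coef iter_xNderiv_X; case: ifP => // _; rewrite scalerMnl mulr_natl.
Qed.

End Commutator.

Section Phi.
Variables (K : fieldType) (N : nat).
Hypotheses (K0 : [pchar K] =i pred0) (N_gt0 : (0 < N)%N).

Lemma coef_scmono (c : K) a b k : (sc c (mono K a b))`_k = (c *: 'X^a) *+ (k == b).
Proof. by rewrite /sc /mono !coefCM coefXn mulr_natr mulrnAr mul_polyC. Qed.

Lemma coef_Phi j k : (Phi K N j)`_k =
  \sum_(i < j)
    ((j%:R^-1 * ('C(j, i)%:R * cval K N i)) *: 'X^(i * (N - 1))) *+ (k == j - i)%N.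
Proof.
rewrite /Phi /sc coefCM coef_sum mulr_sumr; apply: eq_bigr => i _.
by rewrite -/(sc _ _) coef_scmono mul_polyC -scalerMnr scalerA.
Qed.

Lemma size_Phi j : (size (Phi K N j) <= j.+1)%N.
Proof.
apply/leq_sizeP => k lt_jk; rewrite coef_Phi big1 // => i _.
by rewrite eqn_leq [(k <= _)%N]leqNgt (leq_ltn_trans (leq_subr _ _) lt_jk) mulr0n.
Qed.

Lemma inAy_Phi j : inAy N (Phi K N j).
Proof.
apply/inAyP; rewrite coef_Phi big1 // => i _.
by rewrite eq_sym subn_eq0 leqNgt ltn_ord mulr0n.
Qed.

Lemma homog_Phi j : homog N (j * (N - 1)) (Phi K N j).
Proof.
move=> i k; apply: contraNeq => ne_deg; rewrite coef_Phi coef_sum.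
apply/eqP/big1 => i' _.
have [Ek | _] := eqVneq k (j - i')%N; last by rewrite mulr0n coef0.
rewrite coefZ coefXn; have [Ei | _] := eqVneq i (i' * (N - 1))%N; last by rewrite mulr0.
by case/negP: ne_deg; rewrite Ek Ei -mulnDl subnKC // ltnW.
Qed.

Lemma coef_commx_Phi j t : (commx N (Phi K N j))`_t =
  (j%:R^-1 * 'C(j, j - t)%:R *
   \sum_(i < j - t) 'C(j - t, i)%:R * cval K N i * pochhammer1 (N - 1)%:R (j - t - i)%N)
  *: 'X^(1 + (j - t) * (N - 1)).
Proof.
set n := (j - t)%N; have le_nj : (n <= j)%N := leq_subr t j.
pose c (i : nat) := (j%:R^-1 * ('C(j, i)%:R * cval K N i)) *: 'X^(i * (N - 1)) : {poly K}.
rewrite (coef_commx N t (size_Phi j)).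
under eq_bigr do rewrite coef_Phi mulr_suml.
rewrite exchange_big /=.
under eq_bigr => i _.
  under eq_bigr do rewrite (mulrnAl (c i)).
  rewrite (sum_mulrb_eq (fun k => c i * commxYn_coef K N k t)) ltnS leq_subr commxYn_coefE //.
  over.
rewrite mulr_sumr scaler_suml (big_ord_widen j (fun i => (j%:R^-1 * 'C(j, n)%:R *
  ('C(n, i)%:R * cval K N i * pochhammer1 (N - 1)%:R (n - i))) *: 'X^(1 + n * (N - 1))) le_nj).
rewrite [RHS]big_mkcond /=; apply: eq_bigr => i _.
have -> : (t < j - i)%N = (i < n)%N by rewrite /n !ltn_subRL addnC.
case: ifP => [lt_in | _]; last by rewrite mulr0.
have lt_tj : (t < j)%N by rewrite -subn_gt0 (leq_ltn_trans _ lt_in).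
rewrite -scalerAl -scalerAr scalerA -exprD subnAC.
rewrite -/n addnCA -mulnDl (subnKC (ltnW lt_in)); congr (_ *: _).
have binE : ('C(j, i) * 'C(j - i, t) = 'C(j, n) * 'C(n, i))%N.
  by rewrite -bin_mul_bin_sub ?(ltnW lt_in) // /n subKn // ltnW.
transitivity (j%:R^-1 * ('C(j, i) * 'C(j - i, t))%:R *
              (cval K N i * pochhammer1 (N - 1)%:R (n - i)) : K).
  by rewrite natrM -!mulrA [cval K N i * (_ * _)]mulrCA.
by rewrite binE natrM -!mulrA.
Qed.

Lemma commx_Phi j : (0 < j)%N -> commx N (Phi K N j) = mono K N (j - 1).
Proof.
move=> j_gt0; apply/polyP => t; rewrite coef_commx_Phi /mono coefCM coefXn.
case def_n: (j - t)%N => [|n].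
  rewrite big_ord0 mulr0 scale0r (_ : (t == j - 1)%N = false) ?mulr0 //.
  by apply/negbTE; lia.
rewrite cval_rec //; case: n def_n => [|n] def_n; last first.
  rewrite mulr0n mulr0 scale0r (_ : (t == j - 1)%N = false) ?mulr0 //.
  by apply/negbTE; lia.
rewrite (_ : t = j - 1)%N ?eqxx; last by lia.
by rewrite bin1 mulVf ?pchar0_natr_eq0 -?lt0n // mulr1 scale1r mul1n add1n subn1 prednK ?mulr1.
Qed.

Lemma Phi1 : Phi K N 1 = ay K.
Proof.
by rewrite /Phi big_ord1 cval0 //= bin0 mulr1 invr1 mul0n subn0 /sc /ay !polyC1 !mul1r.
Qed.

Lemma size_Phi_sub_leading j : (2 <= j)%N ->
  (size (Phi K N j - (sc j%:R^-1 (mono K 0 j)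
                      - sc (N%:R / 2%:R) (mono K (N - 1) (j - 1))))%R <= j.-1)%N.
Proof.
move=> j_ge2; apply/leq_sizeP => k lt_jk.
rewrite !coefB coef_Phi !coef_scmono.
have [j' def_j] : exists j', j = j'.+2 by exists j.-2; lia.
rewrite def_j in lt_jk *.
rewrite big_ord_recl big_ord_recl big1 => [|i _]; last first.
  rewrite (_ : (k == _)%N = false) ?mulr0n //.
  by apply/negbTE; move: lt_jk; rewrite /= /bump /=; lia.
rewrite addr0 /bump /= cval0 // cval1 // bin0 bin1 mul0n mul1n subn0 subn1 !mulr1 /=.
rewrite mulrA mulVf ?pchar0_natr_eq0 // mul1r scaleNr mulNrn subn1 /=.
by rewrite opprB addrC addrA subrK subrr.
Qed.

End Phi.

Theorem lemma4p1 (K : fieldType) (HK : [pchar K] =i pred0) (N : nat)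
  (HN : (1 <= N)%N) (j : nat) (Hj : (1 <= j)%N) :
  (forall P : PBW K,
     [/\ inAy N P, homog N (j * (N - 1)) P &
         Amul N P (ax K) - Amul N (ax K) P = mono K N (j - 1)]
     <-> P = Phi K N j)
  /\ (j = 1%N -> Phi K N j = ay K)
  /\ ((2 <= j)%N ->
      inF (j%:Z - 2)
        (Phi K N j - (sc (j%:R^-1) (mono K 0 j)
                      - sc (N%:R / 2%:R) (mono K (N - 1) (j - 1))))).
Proof.
split; [move=> P; split | split].
- case=> P_Ay _ comm_P; apply: (commx_inj_inAy HK P_Ay (inAy_Phi _ _ _)).
  by rewrite commx_Phi.
- by move=> ->; split; [exact: inAy_Phi | exact: homog_Phi | exact: commx_Phi].
- by move=> ->; exact: Phi1.
- by move=> j_ge2; have := size_Phi_sub_leading HK HN j_ge2; rewrite /inF; lia.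
Qed.
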